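(* Let $X$ be a connected, locally path connected space. If $\{H_j: j\in J\}$ is any collection of generalized covering subgroups of $\pi_1(X,x_0)$, then $H=\bigcap_{j\in J}H_j$ is a generalized covering subgroup of $\pi_1(X,x_0)$.
   Context: A map $p:(\tilde X,\tilde x_0)\to(X,x_0)$ has the unique lifting (UL) property if for every connected, locally path connected pointed space $(Y,y_0)$ and every map $f:(Y,y_0)\to(X,x_0)$ with $f_*\pi_1(Y,y_0)\subseteq p_*\pi_1(\tilde X,\tilde x_0)$ there is a unique continuous $\tilde f:(Y,y_0)\to(\tilde X,\tilde x_0)$ with $p\circ\tilde f=f$. If $\tilde X$ is connected and locally path connected and $p$ has UL, $p$ is a generalized covering map, and $p_*\pi_1(\tilde X,\tilde x_0)$ is called a generalized covering subgroup of $\pi_1(X,x_0)$. *)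

From Stdlib Require Import Reals Lra.
Open Scope R_scope.

Record Top := {
  carrier :> Type;
  is_open : (carrier -> Prop) -> Prop;
  open_full : is_open (fun _ => True);
  open_inter : forall U V, is_open U -> is_open V -> is_open (fun x => U x /\ V x);
  open_union : forall F : (carrier -> Prop) -> Prop,
      (forall U, F U -> is_open U) -> is_open (fun x => exists U, F U /\ U x)
}.

Definition continuous {X Y : Top} (f : X -> Y) : Prop :=
  forall V : Y -> Prop, is_open Y V -> is_open X (fun x => V (f x)).

Definition openR (U : R -> Prop) : Prop :=
  forall x, U x -> exists e, 0 < e /\ forall y, Rabs (y - x) < e -> U y.

Definition I : Type := { t : R | 0 <= t <= 1 }.

Definition openI (V : I -> Prop) : Prop :=
  exists U, openR U /\ forall t : I, V t <-> U (proj1_sig t).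

Definition openII (W : I * I -> Prop) : Prop :=
  forall s t, W (s, t) -> exists U V, openI U /\ openI V /\ U s /\ V t /\
    forall s' t', U s' -> V t' -> W (s', t').

Lemma I0_pf : 0 <= 0 <= 1. Proof. lra. Qed.
Lemma I1_pf : 0 <= 1 <= 1. Proof. lra. Qed.
Definition I0 : I := exist _ 0 I0_pf.
Definition I1 : I := exist _ 1 I1_pf.

Definition is_path {X : Top} (g : I -> X) : Prop :=
  forall V : X -> Prop, is_open X V -> openI (fun t => V (g t)).

Definition is_loop {X : Top} (x0 : X) (g : I -> X) : Prop :=
  is_path g /\ g I0 = x0 /\ g I1 = x0.

Definition loop_homotopic {X : Top} (x0 : X) (a b : I -> X) : Prop :=
  exists H : I * I -> X,
    (forall V : X -> Prop, is_open X V -> openII (fun st => V (H st))) /\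
    (forall s, H (s, I0) = a s) /\ (forall s, H (s, I1) = b s) /\
    (forall t, H (I0, t) = x0) /\ (forall t, H (I1, t) = x0).

Definition connected (X : Top) : Prop :=
  (exists x : X, True) /\
  forall U V : X -> Prop, is_open X U -> is_open X V ->
    (forall x, U x \/ V x) -> (forall x, ~ (U x /\ V x)) ->
    ~ ((exists x, U x) /\ (exists x, V x)).

Definition locally_path_connected (X : Top) : Prop :=
  forall (x : X) (U : X -> Prop), is_open X U -> U x ->
    exists V : X -> Prop, is_open X V /\ V x /\ (forall y, V y -> U y) /\
      forall y z, V y -> V z -> exists g : I -> X,
        is_path g /\ g I0 = y /\ g I1 = z /\ forall t, V (g t).

(** Subgroups of pi_1(X,x0) are represented by their sets of representing loops
    (predicates on maps I -> X; only their values on loops at x0 matter).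
    [induced_sub p xt0 a] : the loop a at p xt0 represents a class in p_* pi_1(Xt, xt0). *)
Definition induced_sub {Xt X : Top} (p : Xt -> X) (xt0 : Xt) (a : I -> X) : Prop :=
  exists b : I -> Xt, is_loop xt0 b /\ loop_homotopic (p xt0) (fun s => p (b s)) a.

Definition unique_lifting {Xt X : Top} (p : Xt -> X) (xt0 : Xt) : Prop :=
  forall (Y : Top) (y0 : Y) (f : Y -> X),
    connected Y -> locally_path_connected Y -> continuous f -> f y0 = p xt0 ->
    (forall g : I -> Y, is_loop y0 g -> induced_sub p xt0 (fun s => f (g s))) ->
    exists ft : Y -> Xt,
      (continuous ft /\ ft y0 = xt0 /\ forall y, p (ft y) = f y) /\
      forall gt : Y -> Xt,
        (continuous gt /\ gt y0 = xt0 /\ forall y, p (gt y) = f y) -> gt = ft.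

Definition generalized_covering_subgroup (X : Top) (x0 : X) (H : (I -> X) -> Prop) : Prop :=
  exists (Xt : Top) (xt0 : Xt) (p : Xt -> X),
    connected Xt /\ locally_path_connected Xt /\ continuous p /\ p xt0 = x0 /\
    unique_lifting p xt0 /\
    forall a : I -> X, is_loop x0 a -> (H a <-> induced_sub p xt0 a).

(* Let p_j : Xt_j -> X be generalized coverings with p_j_* pi_1 = H_j.  The
   candidate for H is the fibre product of all the p_j over X, retopologized
   so as to be locally path connected and cut down to the points reached by
   based maps from connected, locally path connected spaces.  A map into it is
   a compatible family of maps into X and the Xt_j, so lifts into it exist and
   are unique coordinatewise, by the unique lifting property of each p_j.  A
   loop at x0 is in H_j exactly when it lifts to a loop in Xt_j (lift a
   homotopy over the square), hence it lifts to a loop in the fibre product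
   exactly when it lies in every H_j. *)

From Stdlib Require Import Reals Lra ProofIrrelevance FunctionalExtensionality
  ClassicalEpsilon Classical PropExtensionality.
Open Scope R_scope.

Lemma is_open_ext (Y : Top) (P Q : Y -> Prop) :
  (forall y, P y <-> Q y) -> is_open Y P -> is_open Y Q.
Proof.
  intros HPQ HP. replace Q with P; auto.
  apply functional_extensionality; intros y; apply propositional_extensionality; auto.
Qed.

Lemma continuous_comp {A B C : Top} (f : A -> B) (g : B -> C) :
  continuous f -> continuous g -> continuous (fun x => g (f x)).
Proof. intros Hf Hg V HV. apply (Hf (fun y => V (g y))), Hg, HV. Qed.

Lemma continuous_const {Y Z : Top} (c : Z) : continuous (fun _ : Y => c).
Proof.
  intros V HV. destruct (classic (V c)) as [Vc | nVc].
  - apply (is_open_ext Y (fun _ => True)); [intros; split; auto | apply open_full].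
  - apply (is_open_ext Y (fun y => exists U, False /\ U y)).
    + intros y; split; [intros [U [[] _]] | intros; contradiction].
    + apply open_union. intros U [].
Qed.

Lemma is_open_of_nbhds (Y : Top) (P : Y -> Prop) :
  (forall y, P y -> exists N, is_open Y N /\ N y /\ forall y', N y' -> P y') -> is_open Y P.
Proof.
  intros HP. apply (is_open_ext Y (fun y => exists N, (is_open Y N /\ forall y', N y' -> P y') /\ N y)).
  - intros y; split.
    + intros [N [[_ HNP] Ny]]; auto.
    + intros Py. destruct (HP y Py) as [N [HN [Ny HNP]]]. exists N; auto.
  - apply open_union. intros N [HN _]; auto.
Qed.

Lemma connected_of_connected_images (Z : Top) (z0 : Z) :
  (forall z, exists (Y : Top) (f : Y -> Z) (y0 y : Y),
      connected Y /\ continuous f /\ f y0 = z0 /\ f y = z) ->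
  connected Z.
Proof.
  intros Himg. split; [exists z0; trivial |].
  assert (side : forall W W' : Z -> Prop, is_open Z W -> is_open Z W' ->
            (forall z, W z \/ W' z) -> (forall z, ~ (W z /\ W' z)) -> W z0 -> forall z, W z).
  { intros W W' HW HW' Hcov Hdis W0 z. destruct (Hcov z) as [Wz | W'z]; auto. exfalso.
    destruct (Himg z) as (Y & f & y0 & y & [_ CY] & Hf & f0 & fy).
    apply (CY (fun y => W (f y)) (fun y => W' (f y))); auto.
    split; [exists y0; rewrite f0 | exists y; rewrite fy]; auto. }
  intros U V HU HV Hcov Hdis [[u Uu] [v Vv]].
  destruct (Hcov z0) as [U0 | V0].
  - apply (Hdis v); split; auto. apply (side U V); auto.
  - apply (Hdis u); split; auto. apply (side V U); auto.
    + intros z; destruct (Hcov z); auto.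
    + intros z [Vz Uz]; apply (Hdis z); auto.
Qed.

(** * The unit interval *)

Definition ival (t : I) : R := proj1_sig t.

Lemma ival_bounds (t : I) : 0 <= ival t <= 1.
Proof. exact (proj2_sig t). Qed.

Lemma ival_inj (a b : I) : ival a = ival b -> a = b.
Proof.
  destruct a as [a Ha], b as [b Hb]; unfold ival; simpl; intros ->.
  f_equal; apply proof_irrelevance.
Qed.

Lemma clamp_bounds (x : R) : 0 <= Rmax 0 (Rmin 1 x) <= 1.
Proof. unfold Rmax, Rmin; repeat destruct Rle_dec; lra. Qed.

Definition clamp (x : R) : I := exist _ (Rmax 0 (Rmin 1 x)) (clamp_bounds x).

Lemma ival_clamp (x : R) : 0 <= x <= 1 -> ival (clamp x) = x.
Proof. intros; unfold ival, clamp, Rmax, Rmin; simpl; repeat destruct Rle_dec; lra. Qed.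

Lemma clamp_nonexpansive (x y : R) : Rabs (ival (clamp x) - ival (clamp y)) <= Rabs (x - y).
Proof.
  unfold ival, clamp, Rmax, Rmin; simpl; repeat destruct Rle_dec;
    repeat (unfold Rabs; destruct Rcase_abs); lra.
Qed.

Lemma clamp_ival (t : I) : clamp (ival t) = t.
Proof. apply ival_inj, ival_clamp, ival_bounds. Qed.

Lemma clamp0 : clamp 0 = I0.
Proof. apply ival_inj; rewrite ival_clamp; unfold ival, I0; simpl; lra. Qed.

Lemma clamp1 : clamp 1 = I1.
Proof. apply ival_inj; rewrite ival_clamp; unfold ival, I1; simpl; lra. Qed.

Definition eps_open (V : I -> Prop) : Prop :=
  forall t, V t -> exists e, 0 < e /\ forall t', Rabs (ival t' - ival t) < e -> V t'.

Lemma eps_open_ball (c : I) (e : R) : eps_open (fun t => Rabs (ival t - ival c) < e).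
Proof.
  intros t Ht. exists (e - Rabs (ival t - ival c)); split; [lra |].
  intros t' Ht'. pose proof (Rabs_triang (ival t' - ival t) (ival t - ival c)).
  replace (ival t' - ival t + (ival t - ival c)) with (ival t' - ival c) in * by ring. lra.
Qed.

Lemma openI_iff (V : I -> Prop) : openI V <-> eps_open V.
Proof.
  split.
  - intros [U [HU HV]] t Vt. apply HV in Vt. destruct (HU _ Vt) as [e [He Hball]].
    exists e; split; auto. intros t' Ht'. apply HV, Hball, Ht'.
  - intros HV. exists (fun x => exists t, V t /\ exists e, 0 < e /\
       (forall t', Rabs (ival t' - ival t) < e -> V t') /\ Rabs (x - ival t) < e).
    split.
    + intros x [t [Vt [e [He [Ht Hx]]]]]. exists (e - Rabs (x - ival t)); split; [lra |].
      intros y Hy. exists t; split; auto. exists e; repeat split; auto.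
      pose proof (Rabs_triang (y - x) (x - ival t)).
      replace (y - x + (x - ival t)) with (y - ival t) in * by ring. lra.
    + intros t; split.
      * intros Vt. destruct (HV t Vt) as [e [He Ht]]. exists t; split; auto.
        exists e; repeat split; auto. rewrite Rminus_diag, Rabs_R0; lra.
      * intros [t0 [Vt [e [He [Ht Hx]]]]]. apply Ht, Hx.
Qed.

Definition TopI : Top.
Proof.
  refine {| carrier := I; is_open := openI |}.
  - apply openI_iff. intros t _; exists 1; split; auto; lra.
  - intros U V HU HV. apply openI_iff. apply openI_iff in HU, HV.
    intros t [Ut Vt]. destruct (HU t Ut) as [e1 [He1 H1]], (HV t Vt) as [e2 [He2 H2]].
    exists (Rmin e1 e2); split; [apply Rmin_pos; auto |].
    pose proof (Rmin_l e1 e2); pose proof (Rmin_r e1 e2).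
    intros t' Ht'; split; [apply H1 | apply H2]; lra.
  - intros F HF. apply openI_iff. intros t [U [FU Ut]].
    destruct (proj1 (openI_iff U) (HF U FU) t Ut) as [e [He H]].
    exists e; split; auto. intros t' Ht'. exists U; split; auto.
Defined.

Lemma is_path_eps {X : Top} (g : I -> X) : is_path g <->
  forall V, is_open X V -> forall t, V (g t) ->
    exists e, 0 < e /\ forall t', Rabs (ival t' - ival t) < e -> V (g t').
Proof.
  split.
  - intros Hg V HV. apply (proj1 (openI_iff _)), Hg, HV.
  - intros H V HV. apply openI_iff. intros t. apply H; auto.
Qed.

Lemma is_path_comp {X Y : Top} (f : X -> Y) (g : I -> X) :
  continuous f -> is_path g -> is_path (fun t => f (g t)).
Proof. intros Hf Hg V HV. apply (Hg (fun x => V (f x))), Hf, HV. Qed.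

Lemma is_path_const {X : Top} (x : X) : is_path (fun _ : I => x).
Proof. exact (continuous_const (Y := TopI) x). Qed.

Lemma is_path_nonexpansive (phi : I -> I) :
  (forall s s', Rabs (ival (phi s) - ival (phi s')) <= Rabs (ival s - ival s')) ->
  @is_path TopI phi.
Proof.
  intros Hphi. apply is_path_eps. intros V HV t Vt.
  destruct (proj1 (openI_iff V) HV (phi t) Vt) as [e [He H]].
  exists e; split; auto. intros t' Ht'. apply H. eapply Rle_lt_trans; [apply Hphi | exact Ht'].
Qed.

Definition revI (t : I) : I := clamp (1 - ival t).
Definition shrinkI (u t : I) : I := clamp (ival u * ival t).
Definition segI (y z t : I) : I := clamp ((1 - ival t) * ival y + ival t * ival z).

Lemma is_path_revI : @is_path TopI revI.
Proof.
  apply is_path_nonexpansive. intros s s'. eapply Rle_trans; [apply clamp_nonexpansive |].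
  replace (1 - ival s - (1 - ival s')) with (- (ival s - ival s')) by ring.
  rewrite Rabs_Ropp; lra.
Qed.

Lemma revI0 : revI I0 = I1.
Proof. unfold revI, ival, I0; simpl. rewrite Rminus_0_r; apply clamp1. Qed.

Lemma revI1 : revI I1 = I0.
Proof. unfold revI, ival, I1; simpl. rewrite Rminus_diag; apply clamp0. Qed.

Lemma is_path_shrinkI (u : I) : @is_path TopI (shrinkI u).
Proof.
  apply is_path_nonexpansive. intros s s'. eapply Rle_trans; [apply clamp_nonexpansive |].
  replace (ival u * ival s - ival u * ival s') with (ival u * (ival s - ival s')) by ring.
  rewrite Rabs_mult. pose proof (ival_bounds u). rewrite (Rabs_right (ival u)) by lra.
  pose proof (Rabs_pos (ival s - ival s')). nra.
Qed.

Lemma shrinkI0 (u : I) : shrinkI u I0 = I0.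
Proof. unfold shrinkI, ival at 2, I0; simpl. rewrite Rmult_0_r; apply clamp0. Qed.

Lemma shrinkI1 (u : I) : shrinkI u I1 = u.
Proof. unfold shrinkI, ival at 2, I1; simpl. rewrite Rmult_1_r; apply clamp_ival. Qed.

Lemma ival_segI (y z t : I) : ival (segI y z t) = (1 - ival t) * ival y + ival t * ival z.
Proof.
  apply ival_clamp.
  pose proof (ival_bounds y); pose proof (ival_bounds z); pose proof (ival_bounds t); nra.
Qed.

Lemma segI_nonexpansive (y z s s' : I) :
  Rabs (ival (segI y z s) - ival (segI y z s')) <= Rabs (ival s - ival s').
Proof.
  rewrite !ival_segI.
  replace ((1 - ival s) * ival y + ival s * ival z - ((1 - ival s') * ival y + ival s' * ival z))
    with ((ival s - ival s') * (ival z - ival y)) by ring.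
  rewrite Rabs_mult. pose proof (ival_bounds y); pose proof (ival_bounds z).
  assert (Rabs (ival z - ival y) <= 1) by (apply Rabs_le; lra).
  pose proof (Rabs_pos (ival s - ival s')). nra.
Qed.

Lemma segI0 (y z : I) : segI y z I0 = y.
Proof. apply ival_inj; rewrite ival_segI; unfold ival at 1 3, I0; simpl; ring. Qed.

Lemma segI1 (y z : I) : segI y z I1 = z.
Proof. apply ival_inj; rewrite ival_segI; unfold ival at 1 3, I1; simpl; ring. Qed.

Lemma convex_comb_lt (w u v e : R) (t : I) :
  Rabs (u - w) < e -> Rabs (v - w) < e -> Rabs ((1 - ival t) * u + ival t * v - w) < e.
Proof.
  intros Hu Hv. pose proof (ival_bounds t).
  replace ((1 - ival t) * u + ival t * v - w) with ((1 - ival t) * (u - w) + ival t * (v - w)) by ring.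
  eapply Rle_lt_trans; [apply Rabs_triang |].
  rewrite !Rabs_mult, (Rabs_right (1 - ival t)), (Rabs_right (ival t)) by lra.
  assert (0 <= (1 - ival t) * (e - Rabs (u - w))) by (apply Rmult_le_pos; lra).
  assert (0 <= ival t * (e - Rabs (v - w))) by (apply Rmult_le_pos; lra).
  destruct (Req_dec (ival t) 0) as [->|]; [lra | nra].
Qed.

Definition path_concat {A : Type} (g1 g2 : I -> A) (t : I) : A :=
  if Rle_dec (ival t) (1/2) then g1 (clamp (2 * ival t)) else g2 (clamp (2 * ival t - 1)).

Lemma path_concat0 {A : Type} (g1 g2 : I -> A) : path_concat g1 g2 I0 = g1 I0.
Proof.
  unfold path_concat; destruct Rle_dec; unfold ival, I0 in *; simpl in *; [| lra].
  rewrite Rmult_0_r, clamp0; auto.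
Qed.

Lemma path_concat1 {A : Type} (g1 g2 : I -> A) : path_concat g1 g2 I1 = g2 I1.
Proof.
  unfold path_concat; destruct Rle_dec; unfold ival, I1 in *; simpl in *; [lra |].
  replace (2 * 1 - 1) with 1 by ring. rewrite clamp1; auto.
Qed.

Lemma path_concat_cases {A : Type} (g1 g2 : I -> A) (t : I) :
  exists s, path_concat g1 g2 t = g1 s \/ path_concat g1 g2 t = g2 s.
Proof. unfold path_concat; destruct Rle_dec; eauto. Qed.

Lemma path_concat_map {A B : Type} (f : A -> B) (g1 g2 : I -> A) :
  (fun t => f (path_concat g1 g2 t)) = path_concat (fun s => f (g1 s)) (fun s => f (g2 s)).
Proof. apply functional_extensionality; intros t; unfold path_concat; destruct Rle_dec; auto. Qed.

Lemma is_path_concat {X : Top} (g1 g2 : I -> X) :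
  is_path g1 -> is_path g2 -> g1 I1 = g2 I0 -> is_path (path_concat g1 g2).
Proof.
  intros H1 H2 E. apply is_path_eps. intros V HV t Vt.
  pose proof (ival_bounds t) as Bt.
  destruct (Rtotal_order (ival t) (1/2)) as [Hlt | [Heq | Hgt]].
  - unfold path_concat in Vt; destruct Rle_dec; [| lra].
    destruct (proj1 (is_path_eps _) H1 V HV _ Vt) as [e [He H]].
    exists (Rmin (e/2) (1/2 - ival t)); split; [apply Rmin_pos; lra |].
    intros t' Ht'. pose proof (Rmin_l (e/2) (1/2 - ival t)); pose proof (Rmin_r (e/2) (1/2 - ival t)).
    apply Rabs_def2 in Ht' as Ht''.
    unfold path_concat; destruct Rle_dec; [| lra].
    apply H. eapply Rle_lt_trans; [apply clamp_nonexpansive |].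
    replace (2 * ival t' - 2 * ival t) with (2 * (ival t' - ival t)) by ring.
    rewrite Rabs_mult, Rabs_right; lra.
  - assert (V1 : V (g1 I1)).
    { unfold path_concat in Vt; destruct Rle_dec; [| lra]. rewrite Heq in Vt.
      replace (2 * (1/2)) with 1 in Vt by field. rewrite clamp1 in Vt; auto. }
    assert (V2 : V (g2 I0)) by (rewrite <- E; auto).
    destruct (proj1 (is_path_eps _) H1 V HV _ V1) as [e1 [He1 Q1]].
    destruct (proj1 (is_path_eps _) H2 V HV _ V2) as [e2 [He2 Q2]].
    exists (Rmin e1 e2 / 2); split; [pose proof (Rmin_pos _ _ He1 He2); lra |].
    intros t' Ht'. pose proof (Rmin_l e1 e2); pose proof (Rmin_r e1 e2). rewrite Heq in Ht'.
    apply Rabs_def2 in Ht'. pose proof (ival_bounds t').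
    unfold path_concat; destruct Rle_dec.
    + apply Q1. rewrite <- clamp1. eapply Rle_lt_trans; [apply clamp_nonexpansive |].
      rewrite Rabs_left1; lra.
    + apply Q2. rewrite <- clamp0. eapply Rle_lt_trans; [apply clamp_nonexpansive |].
      rewrite Rabs_right; lra.
  - unfold path_concat in Vt; destruct Rle_dec; [lra |].
    destruct (proj1 (is_path_eps _) H2 V HV _ Vt) as [e [He H]].
    exists (Rmin (e/2) (ival t - 1/2)); split; [apply Rmin_pos; lra |].
    intros t' Ht'. pose proof (Rmin_l (e/2) (ival t - 1/2)); pose proof (Rmin_r (e/2) (ival t - 1/2)).
    apply Rabs_def2 in Ht' as Ht''.
    unfold path_concat; destruct Rle_dec; [lra |].
    apply H. eapply Rle_lt_trans; [apply clamp_nonexpansive |].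
    replace (2 * ival t' - 1 - (2 * ival t - 1)) with (2 * (ival t' - ival t)) by ring.
    rewrite Rabs_mult, Rabs_right; lra.
Qed.

Lemma lpc_I : locally_path_connected TopI.
Proof.
  intros x U HU Ux. destruct (proj1 (openI_iff U) HU x Ux) as [e [He Hball]].
  exists (fun t => Rabs (ival t - ival x) < e). split; [| split; [| split]].
  - apply openI_iff, eps_open_ball.
  - rewrite Rminus_diag, Rabs_R0; auto.
  - auto.
  - intros y z Hy Hz. exists (segI y z). split; [| split; [apply segI0 | split; [apply segI1 |]]].
    + apply is_path_nonexpansive, segI_nonexpansive.
    + intros t. rewrite ival_segI. apply convex_comb_lt; auto.
Qed.

(* A separation of [I] would make its indicator a continuous real function
   taking only the values -1 and 1, against the intermediate value theorem. *)
Lemma connected_I : connected TopI.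
Proof.
  split; [exists I0; trivial |].
  intros U V HU HV Hcov Hdis [[u Uu] [v Vv]].
  apply openI_iff in HU, HV.
  set (f := fun x => if excluded_middle_informative (U (clamp x)) then -1 else 1).
  assert (Hlocal : forall x, exists d, 0 < d /\ forall y, Rabs (y - x) < d -> f y = f x).
  { intros x. unfold f. destruct (excluded_middle_informative (U (clamp x))) as [Ux | nUx].
    - destruct (HU _ Ux) as [d [Hd Hball]]. exists d; split; auto. intros y Hy.
      destruct excluded_middle_informative as [| nUy]; auto. exfalso. apply nUy, Hball.
      eapply Rle_lt_trans; [apply clamp_nonexpansive | exact Hy].
    - assert (Vx : V (clamp x)) by (destruct (Hcov (clamp x)); tauto).
      destruct (HV _ Vx) as [d [Hd Hball]]. exists d; split; auto. intros y Hy.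
      destruct excluded_middle_informative as [Uy |]; auto. exfalso.
      apply (Hdis (clamp y)); split; auto. apply Hball.
      eapply Rle_lt_trans; [apply clamp_nonexpansive | exact Hy]. }
  assert (Hcont : continuity f).
  { intros x eps Heps. destruct (Hlocal x) as [d [Hd Hy]]. exists d; split; auto.
    intros y [_ Hyx]. simpl in *. unfold R_dist in *.
    rewrite Hy by auto. rewrite Rminus_diag, Rabs_R0; auto. }
  assert (fu : f (ival u) = -1).
  { unfold f. rewrite clamp_ival. destruct excluded_middle_informative; tauto. }
  assert (fv : f (ival v) = 1).
  { unfold f. rewrite clamp_ival. destruct excluded_middle_informative as [Uv |]; auto.
    exfalso; apply (Hdis v); auto. }
  assert (Hsign : f (ival u) * f (ival v) <= 0) by (rewrite fu, fv; lra).
  destruct (Rle_dec (ival u) (ival v)) as [Huv | Hvu].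
  - destruct (IVT_cor f _ _ Hcont Huv Hsign) as [z [_ fz]].
    unfold f in fz; destruct excluded_middle_informative; lra.
  - rewrite Rmult_comm in Hsign.
    destruct (IVT_cor f (ival v) (ival u) Hcont ltac:(lra) Hsign) as [z [_ fz]].
    unfold f in fz; destruct excluded_middle_informative; lra.
Qed.

(** * The unit square *)

Definition ballII (c : I * I) (e : R) (q : I * I) : Prop :=
  Rabs (ival (fst q) - ival (fst c)) < e /\ Rabs (ival (snd q) - ival (snd c)) < e.

Lemma ballII_center (c : I * I) (e : R) : 0 < e -> ballII c e c.
Proof. intros He; unfold ballII; rewrite !Rminus_diag, Rabs_R0; auto. Qed.

Lemma openII_iff (W : I * I -> Prop) :
  openII W <-> forall q, W q -> exists e, 0 < e /\ forall q', ballII q e q' -> W q'.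
Proof.
  split.
  - intros HW [s t] Wst. destruct (HW s t Wst) as [U [V [HU [HV [Us [Vt HUV]]]]]].
    apply openI_iff in HU, HV. destruct (HU s Us) as [e1 [He1 H1]], (HV t Vt) as [e2 [He2 H2]].
    exists (Rmin e1 e2); split; [apply Rmin_pos; auto |].
    pose proof (Rmin_l e1 e2); pose proof (Rmin_r e1 e2).
    intros [s' t'] [Hs Ht]; simpl in *. apply HUV; [apply H1 | apply H2]; lra.
  - intros HW s t Wst. destruct (HW (s, t) Wst) as [e [He Hball]].
    exists (fun x => Rabs (ival x - ival s) < e), (fun x => Rabs (ival x - ival t) < e).
    split; [apply openI_iff, eps_open_ball |]. split; [apply openI_iff, eps_open_ball |].
    split; [rewrite Rminus_diag, Rabs_R0; auto |]. split; [rewrite Rminus_diag, Rabs_R0; auto |].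
    intros s' t' Hs Ht. apply Hball. split; auto.
Qed.

Lemma ballII_shrink (c q : I * I) (e : R) :
  ballII c e q -> exists r, 0 < r /\ forall q', ballII q r q' -> ballII c e q'.
Proof.
  intros [H1 H2].
  exists (Rmin (e - Rabs (ival (fst q) - ival (fst c))) (e - Rabs (ival (snd q) - ival (snd c)))).
  split; [apply Rmin_pos; lra |]. intros q' [H1' H2'].
  pose proof (Rmin_l (e - Rabs (ival (fst q) - ival (fst c))) (e - Rabs (ival (snd q) - ival (snd c)))).
  pose proof (Rmin_r (e - Rabs (ival (fst q) - ival (fst c))) (e - Rabs (ival (snd q) - ival (snd c)))).
  pose proof (Rabs_triang (ival (fst q') - ival (fst q)) (ival (fst q) - ival (fst c))).
  pose proof (Rabs_triang (ival (snd q') - ival (snd q)) (ival (snd q) - ival (snd c))).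
  replace (ival (fst q') - ival (fst q) + (ival (fst q) - ival (fst c)))
    with (ival (fst q') - ival (fst c)) in * by ring.
  replace (ival (snd q') - ival (snd q) + (ival (snd q) - ival (snd c)))
    with (ival (snd q') - ival (snd c)) in * by ring.
  split; lra.
Qed.

Lemma ballII_open (c : I * I) (e : R) : openII (ballII c e).
Proof. apply openII_iff. intros q Hq. apply ballII_shrink, Hq. Qed.

Definition TopII : Top.
Proof.
  refine {| carrier := (I * I)%type; is_open := openII |}.
  - apply openII_iff. intros; exists 1; split; auto; lra.
  - intros U V HU HV. apply openII_iff. intros q [Uq Vq].
    destruct (proj1 (openII_iff U) HU q Uq) as [e1 [He1 H1]].
    destruct (proj1 (openII_iff V) HV q Vq) as [e2 [He2 H2]].
    exists (Rmin e1 e2); split; [apply Rmin_pos; auto |].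
    pose proof (Rmin_l e1 e2); pose proof (Rmin_r e1 e2).
    intros q' [A B]; split; [apply H1 | apply H2]; split; lra.
  - intros F HF. apply openII_iff. intros q [U [FU Uq]].
    destruct (proj1 (openII_iff U) (HF U FU) q Uq) as [e [He H]].
    exists e; split; auto. intros q' Hq'. exists U; split; auto.
Defined.

Lemma is_path_square (psi : I -> I * I) :
  (forall s s', Rabs (ival (fst (psi s)) - ival (fst (psi s'))) <= Rabs (ival s - ival s')) ->
  (forall s s', Rabs (ival (snd (psi s)) - ival (snd (psi s'))) <= Rabs (ival s - ival s')) ->
  @is_path TopII psi.
Proof.
  intros H1 H2 W HW. apply openI_iff. intros t Wt.
  destruct (proj1 (openII_iff W) HW (psi t) Wt) as [e [He Hball]].
  exists e; split; auto. intros t' Ht'. apply Hball.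
  split; eapply Rle_lt_trans; [apply H1 | exact Ht' | apply H2 | exact Ht'].
Qed.

Lemma is_path_square_row (t : I) : @is_path TopII (fun s => (s, t)).
Proof. apply is_path_square; intros; simpl; [lra | rewrite Rminus_diag, Rabs_R0; apply Rabs_pos]. Qed.

Lemma is_path_square_column (s : I) : @is_path TopII (fun t => (s, t)).
Proof. apply is_path_square; intros; simpl; [rewrite Rminus_diag, Rabs_R0; apply Rabs_pos | lra]. Qed.

Definition segII (y z : I * I) (t : I) : I * I := (segI (fst y) (fst z) t, segI (snd y) (snd z) t).

Lemma is_path_segII (y z : I * I) : @is_path TopII (segII y z).
Proof. apply is_path_square; intros; apply segI_nonexpansive. Qed.

Lemma segII0 (y z : I * I) : segII y z I0 = y.
Proof. unfold segII; rewrite !segI0; destruct y; auto. Qed.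

Lemma segII1 (y z : I * I) : segII y z I1 = z.
Proof. unfold segII; rewrite !segI1; destruct z; auto. Qed.

Lemma lpc_II : locally_path_connected TopII.
Proof.
  intros q U HU Uq. destruct (proj1 (openII_iff U) HU q Uq) as [e [He Hball]].
  exists (ballII q e). split; [| split; [| split]].
  - apply ballII_open.
  - apply ballII_center, He.
  - exact Hball.
  - intros y z [Hy1 Hy2] [Hz1 Hz2].
    exists (segII y z). split; [apply is_path_segII | split; [apply segII0 | split; [apply segII1 |]]].
    intros t. unfold ballII, segII in *; cbn [fst snd].
    rewrite !ival_segI. split; apply convex_comb_lt; auto.
Qed.

Lemma connected_II : connected TopII.
Proof.
  apply (connected_of_connected_images TopII (I0, I0)). intros q.
  exists TopI, (segII (I0, I0) q), I0, I1.
  split; [apply connected_I |]. split; [apply is_path_segII |].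
  split; [apply segII0 | apply segII1].
Qed.

Definition scaleII (t : I) (q : I * I) : I * I := (shrinkI t (fst q), shrinkI t (snd q)).

Lemma shrinkI_close (t t' u u' : I) (e : R) :
  Rabs (ival t' - ival t) < e / 2 -> Rabs (ival u' - ival u) < e / 2 ->
  Rabs (ival (shrinkI t' u') - ival (shrinkI t u)) < e.
Proof.
  intros Ht Hu. eapply Rle_lt_trans; [apply clamp_nonexpansive |].
  replace (ival t' * ival u' - ival t * ival u)
    with (ival t' * (ival u' - ival u) + (ival t' - ival t) * ival u) by ring.
  eapply Rle_lt_trans; [apply Rabs_triang |]. rewrite !Rabs_mult.
  pose proof (ival_bounds t'); pose proof (ival_bounds u).
  rewrite (Rabs_right (ival t')), (Rabs_right (ival u)) by lra.
  assert (ival t' * Rabs (ival u' - ival u) <= Rabs (ival u' - ival u))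
    by (pose proof (Rabs_pos (ival u' - ival u)); nra).
  assert (Rabs (ival t' - ival t) * ival u <= Rabs (ival t' - ival t))
    by (pose proof (Rabs_pos (ival t' - ival t)); nra).
  lra.
Qed.

Lemma scaleII_continuous (g : I -> I * I) :
  @is_path TopII g -> @continuous TopII TopII (fun q => scaleII (snd q) (g (fst q))).
Proof.
  intros Hg W HW. apply openII_iff. intros [s t] Wst.
  destruct (proj1 (openII_iff W) HW _ Wst) as [e [He Hball]].
  destruct (proj1 (openI_iff _) (Hg _ (ballII_open (g s) (e / 2))) s
              (ballII_center (g s) (e / 2) ltac:(lra))) as [d [Hd Hnear]].
  exists (Rmin d (e / 2)); split; [apply Rmin_pos; lra |].
  intros [s' t'] [Hs Ht]; simpl in Hs, Ht.
  pose proof (Rmin_l d (e / 2)); pose proof (Rmin_r d (e / 2)).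
  destruct (Hnear s' ltac:(lra)) as [H1 H2].
  apply Hball. split; apply shrinkI_close; simpl; lra.
Qed.

Lemma shrinkI_0_l (t : I) : shrinkI I0 t = I0.
Proof. unfold shrinkI, ival at 1, I0; simpl. rewrite Rmult_0_l; apply clamp0. Qed.

Lemma shrinkI_1_l (t : I) : shrinkI I1 t = t.
Proof. unfold shrinkI, ival at 1, I1; simpl. rewrite Rmult_1_l; apply clamp_ival. Qed.

Lemma is_loop_const {X : Top} (x : X) : is_loop x (fun _ : I => x).
Proof. repeat split; auto. apply is_path_const. Qed.

Lemma is_loop_comp {X Y : Top} (f : X -> Y) (x : X) (g : I -> X) :
  continuous f -> is_loop x g -> is_loop (f x) (fun s => f (g s)).
Proof. intros Hf [Hg [g0 g1]]. split; [apply is_path_comp; auto | rewrite g0, g1; auto]. Qed.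

Lemma loop_homotopic_refl {X : Top} (x0 : X) (a : I -> X) :
  is_loop x0 a -> loop_homotopic x0 a a.
Proof.
  intros [Ha [a0 a1]]. exists (fun q => a (fst q)). repeat split; simpl; auto.
  intros V HV. apply openII_iff. intros [s t] Vs.
  destruct (proj1 (is_path_eps a) Ha V HV s Vs) as [e [He Hnear]].
  exists e; split; auto. intros q' [Hq' _]. apply Hnear, Hq'.
Qed.

(* The homotopy is the radial contraction of the square onto its corner. *)
Lemma square_loop_nullhomotopic {X : Top} (f : TopII -> X) (g : I -> I * I) :
  continuous f -> is_loop (X := TopII) (I0, I0) g ->
  loop_homotopic (f (I0, I0)) (fun _ => f (I0, I0)) (fun s => f (g s)).
Proof.
  intros Hf [Hg [g0 g1]].
  exists (fun q => f (scaleII (snd q) (g (fst q)))). repeat split.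
  - intros V HV. exact (continuous_comp _ f (scaleII_continuous g Hg) Hf V HV).
  - intros s; unfold scaleII; simpl. rewrite !shrinkI_0_l; auto.
  - intros s; unfold scaleII; simpl. rewrite !shrinkI_1_l. destruct (g s); auto.
  - intros t; unfold scaleII; simpl. rewrite g0; simpl. rewrite shrinkI0; auto.
  - intros t; unfold scaleII; simpl. rewrite g1; simpl. rewrite shrinkI0; auto.
Qed.

(** * Lifting paths and loops *)

Section PathLifting.

Variables (Xt X : Top) (p : Xt -> X) (xt0 : Xt).
Hypotheses (p_cont : continuous p) (p_ul : unique_lifting p xt0).

Lemma path_lift_unique (g1 g2 : I -> Xt) :
  is_path g1 -> is_path g2 -> g1 I0 = xt0 -> g2 I0 = xt0 ->
  (forall s, p (g1 s) = p (g2 s)) -> g1 = g2.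
Proof.
  intros P1 P2 A1 A2 Hp.
  assert (Hinduced : forall g : I -> TopI, is_loop (X := TopI) I0 g ->
            induced_sub p xt0 (fun s => p (g1 (g s)))).
  { intros g Hg. assert (Hloop : is_loop xt0 (fun s => g1 (g s))).
    { rewrite <- A1. exact (is_loop_comp (X := TopI) g1 I0 g P1 Hg). }
    exists (fun s => g1 (g s)). split; [exact Hloop |].
    apply loop_homotopic_refl, (is_loop_comp p xt0 _ p_cont Hloop). }
  assert (Hstart : p (g1 I0) = p xt0) by (rewrite A1; auto).
  destruct (p_ul TopI I0 (fun s => p (g1 s)) connected_I lpc_I (is_path_comp p g1 p_cont P1)
              Hstart Hinduced) as [ft [_ Hunique]].
  rewrite (Hunique g1), (Hunique g2); auto.
Qed.

Lemma square_lift (H : TopII -> X) :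
  continuous H -> H (I0, I0) = p xt0 ->
  exists Ht : TopII -> Xt, continuous Ht /\ Ht (I0, I0) = xt0 /\ forall q, p (Ht q) = H q.
Proof.
  intros HH H00.
  destruct (p_ul TopII (I0, I0) H connected_II lpc_II HH H00) as [Ht [Hlift _]].
  - intros g Hg. exists (fun _ => xt0). split; [apply is_loop_const |].
    cbv beta. rewrite <- H00. apply square_loop_nullhomotopic; auto.
  - exists Ht; exact Hlift.
Qed.

(* Lift the homotopy from [p o b] to [a]: its bottom edge is [b], its vertical
   edges stay at [xt0], so its top edge is a lift of [a] closing up at [xt0]. *)
Lemma induced_loop_lifts (a : I -> X) :
  induced_sub p xt0 a -> exists at0 : I -> Xt, is_loop xt0 at0 /\ forall s, p (at0 s) = a s.
Proof.
  intros [b [[Pb [b0 b1]] [H [HH [Hbot [Htop [Hleft Hright]]]]]]].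
  destruct (square_lift H HH (Hleft I0)) as [Ht [HtC [Ht00 HtH]]].
  assert (Bottom : (fun s => Ht (s, I0)) = b).
  { apply path_lift_unique; auto.
    - apply (is_path_comp Ht _ HtC (is_path_square_row I0)).
    - intros s. rewrite HtH; auto. }
  assert (Left : (fun t => Ht (I0, t)) = (fun _ => xt0)).
  { apply path_lift_unique; auto.
    - apply (is_path_comp Ht _ HtC (is_path_square_column I0)).
    - apply is_path_const.
    - intros t. rewrite HtH; auto. }
  assert (Right : (fun t => Ht (I1, t)) = (fun _ => xt0)).
  { apply path_lift_unique; auto.
    - apply (is_path_comp Ht _ HtC (is_path_square_column I1)).
    - apply is_path_const.
    - rewrite <- b1. exact (equal_f Bottom I1).
    - intros t. rewrite HtH; auto. }
  exists (fun s => Ht (s, I1)). split; [split; [| split] |].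
  - apply (is_path_comp Ht _ HtC (is_path_square_row I1)).
  - exact (equal_f Left I1).
  - exact (equal_f Right I1).
  - intros s. rewrite HtH; auto.
Qed.

End PathLifting.

(** * The fibre product of the coverings *)

Section FibreProduct.

Variables (X : Top) (x0 : X) (J : Type) (Xt : J -> Top) (xt0 : forall j, Xt j)
  (p : forall j, Xt j -> X).
Hypothesis p_xt0 : forall j, p j (xt0 j) = x0.

Record fibre_point : Type := FibrePoint {
  fbase : X;
  fcoord : forall j, Xt j;
  fcoord_over : forall j, p j (fcoord j) = fbase }.

Definition fibre_base : fibre_point := FibrePoint x0 xt0 p_xt0.

Lemma fibre_point_eq (a b : fibre_point) :
  fbase a = fbase b -> (forall j, fcoord a j = fcoord b j) -> a = b.
Proof.
  destruct a as [xa za Ha], b as [xb zb Hb]; simpl. intros -> Hz.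
  apply functional_extensionality_dep in Hz; subst zb. f_equal; apply proof_irrelevance.
Qed.

Definition coord_space (c : option J) : Top :=
  match c with Some j => Xt j | None => X end.

Definition coord (c : option J) : fibre_point -> coord_space c :=
  match c return fibre_point -> coord_space c with
  | Some j => fun z => fcoord z j
  | None => fbase
  end.

Definition coord_continuous {Y : Top} (h : Y -> fibre_point) : Prop :=
  forall c, continuous (fun y => coord c (h y)).

Inductive basic_open : (fibre_point -> Prop) -> Prop :=
  | basic_open_coord c U : is_open (coord_space c) U -> basic_open (fun z => U (coord c z))
  | basic_open_inter O1 O2 : basic_open O1 -> basic_open O2 -> basic_open (fun z => O1 z /\ O2 z).

Lemma basic_open_full : basic_open (fun _ => True).
Proof. exact (basic_open_coord None _ (open_full X)). Qed.

Lemma basic_open_preimage {Y : Top} (h : Y -> fibre_point) (O : fibre_point -> Prop) :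
  coord_continuous h -> basic_open O -> is_open Y (fun y => O (h y)).
Proof. intros Hh HO; induction HO; [apply (Hh c); auto | apply open_inter; auto]. Qed.

(* Restricting to points reached by based lifts of connected, locally path
   connected spaces is what makes the resulting space connected. *)
Definition reachable (z : fibre_point) : Prop :=
  exists (Y : Top) (y0 y : Y) (h : Y -> fibre_point),
    connected Y /\ locally_path_connected Y /\ coord_continuous h /\
    h y0 = fibre_base /\ h y = z.

Definition reachable_point : Type := { z : fibre_point | reachable z }.

Lemma reachable_point_eq (a b : reachable_point) : proj1_sig a = proj1_sig b -> a = b.
Proof. destruct a as [a Ha], b as [b Hb]; simpl; intros ->. f_equal; apply proof_irrelevance. Qed.

Definition coord_path (g : I -> reachable_point) : Prop :=
  coord_continuous (Y := TopI) (fun t => proj1_sig (g t)).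

Definition joinable_in (O : fibre_point -> Prop) (z w : reachable_point) : Prop :=
  exists g : I -> reachable_point,
    coord_path g /\ g I0 = z /\ g I1 = w /\ forall t, O (proj1_sig (g t)).

(* The topology generated by the path components of the basic open sets of
   the product: the locally path connected refinement of the product topology. *)
Definition openXH (W : reachable_point -> Prop) : Prop :=
  forall z, W z -> exists O, basic_open O /\ O (proj1_sig z) /\
    forall w, joinable_in O z w -> W w.

Lemma coord_path_const (z : reachable_point) : coord_path (fun _ => z).
Proof. intros c. exact (is_path_const _). Qed.

Lemma coord_path_reparam (g : I -> reachable_point) (phi : I -> I) :
  coord_path g -> @is_path TopI phi -> coord_path (fun t => g (phi t)).
Proof. intros Hg Hphi c. exact (is_path_comp (X := TopI) _ phi (Hg c) Hphi). Qed.

Lemma coord_path_concat (g1 g2 : I -> reachable_point) :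
  coord_path g1 -> coord_path g2 -> g1 I1 = g2 I0 -> coord_path (path_concat g1 g2).
Proof.
  intros H1 H2 E c.
  assert (Hc : is_path (path_concat (fun s => coord c (proj1_sig (g1 s)))
                                    (fun s => coord c (proj1_sig (g2 s))))).
  { apply is_path_concat; [exact (H1 c) | exact (H2 c) | rewrite E; auto]. }
  rewrite <- (path_concat_map (fun z => coord c (proj1_sig z))) in Hc. exact Hc.
Qed.

Lemma joinable_in_mono (O1 O2 : fibre_point -> Prop) (z w : reachable_point) :
  (forall u, O1 u -> O2 u) -> joinable_in O1 z w -> joinable_in O2 z w.
Proof. intros H [g [Hg [g0 [g1 gO]]]]. exists g; repeat split; auto. Qed.

Lemma joinable_in_refl (O : fibre_point -> Prop) (z : reachable_point) :
  O (proj1_sig z) -> joinable_in O z z.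
Proof. intros Oz. exists (fun _ => z). repeat split; auto. apply coord_path_const. Qed.

Lemma joinable_in_trans (O : fibre_point -> Prop) (z y w : reachable_point) :
  joinable_in O z y -> joinable_in O y w -> joinable_in O z w.
Proof.
  intros [g [Hg [g0 [g1 gO]]]] [g' [Hg' [g0' [g1' gO']]]].
  exists (path_concat g g'). split; [| split; [| split]].
  - apply coord_path_concat; auto. rewrite g1, g0'; auto.
  - rewrite path_concat0; auto.
  - rewrite path_concat1; auto.
  - intros t. destruct (path_concat_cases g g' t) as [s [-> | ->]]; auto.
Qed.

Lemma joinable_in_along (O : fibre_point -> Prop) (g : I -> reachable_point) (u : I) :
  coord_path g -> (forall t, O (proj1_sig (g t))) -> joinable_in O (g I0) (g u).
Proof.
  intros Hg gO. exists (fun t => g (shrinkI u t)).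
  split; [apply coord_path_reparam; auto; apply is_path_shrinkI |].
  rewrite shrinkI0, shrinkI1. repeat split; auto.
Qed.

Definition XH : Top.
Proof.
  refine {| carrier := reachable_point; is_open := openXH |}.
  - intros z _. exists (fun _ => True). split; [apply basic_open_full | auto].
  - intros U V HU HV z [Uz Vz].
    destruct (HU z Uz) as [O1 [B1 [O1z H1]]], (HV z Vz) as [O2 [B2 [O2z H2]]].
    exists (fun u => O1 u /\ O2 u). split; [apply basic_open_inter; auto | split; auto].
    intros w Hw; split; [apply H1 | apply H2];
      eapply joinable_in_mono; try exact Hw; intros u [A B]; auto.
  - intros F HF z [U [FU Uz]]. destruct (HF U FU z Uz) as [O [B [Oz H]]].
    exists O; repeat split; auto. intros w Hw. exists U; split; auto.
Defined.

Lemma continuous_coord_XH (c : option J) : continuous (fun z : XH => coord c (proj1_sig z)).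
Proof.
  intros U HU z Uz. exists (fun u => U (coord c u)).
  split; [apply basic_open_coord; auto |]. split; auto.
  intros w [g [_ [_ [g1 gU]]]]. rewrite <- g1; apply gU.
Qed.

Lemma continuous_into_XH (Y : Top) (h : Y -> XH) :
  locally_path_connected Y -> coord_continuous (fun y => proj1_sig (h y)) -> continuous h.
Proof.
  intros HY Hh W HW. apply is_open_of_nbhds. intros y Wy.
  destruct (HW _ Wy) as [O [HO [Oy HOW]]].
  destruct (HY y _ (basic_open_preimage _ O Hh HO) Oy) as [N [HN [Ny [HNO Hpath]]]].
  exists N. split; auto. split; auto. intros y' Ny'. apply HOW.
  destruct (Hpath y y' Ny Ny') as [g [Hg [g0 [g1 gN]]]].
  exists (fun t => h (g t)). split; [| split; [| split]].
  - intros c. exact (is_path_comp _ g (Hh c) Hg).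
  - rewrite g0; auto.
  - rewrite g1; auto.
  - intros t; apply HNO, gN.
Qed.

Lemma is_path_of_coord_path (g : I -> reachable_point) : coord_path g -> @is_path XH g.
Proof. exact (continuous_into_XH TopI g lpc_I). Qed.

Lemma reachable_base : reachable fibre_base.
Proof.
  exists TopI, I0, I0, (fun _ => fibre_base).
  split; [apply connected_I |]. split; [apply lpc_I |].
  split; [intros c; apply continuous_const | auto].
Qed.

Definition xH0 : XH := exist _ fibre_base reachable_base.
Definition pH (z : XH) : X := fbase (proj1_sig z).
Definition proj (j : J) (z : XH) : Xt j := fcoord (proj1_sig z) j.

Lemma lpc_XH : locally_path_connected XH.
Proof.
  intros z W HW Wz. destruct (HW z Wz) as [O [HO [Oz HOW]]].
  exists (joinable_in O z). split; [| split; [| split]].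
  - intros w [g [Hg [g0 [g1 gO]]]]. exists O. split; auto.
    split; [rewrite <- g1; apply gO |].
    intros w' Hw'. apply (joinable_in_trans O z w w'); auto. exists g; auto.
  - apply joinable_in_refl, Oz.
  - exact HOW.
  - intros y w [gy [Hgy [gy0 [gy1 gyO]]]] [gw [Hgw [gw0 [gw1 gwO]]]].
    exists (path_concat (fun t => gy (revI t)) gw). split; [| split; [| split]].
    + apply is_path_of_coord_path, coord_path_concat; auto.
      * apply coord_path_reparam; auto. apply is_path_revI.
      * rewrite revI1, gy0, gw0; auto.
    + rewrite path_concat0, revI0; auto.
    + rewrite path_concat1; auto.
    + intros t. destruct (path_concat_cases (fun t => gy (revI t)) gw t) as [s [-> | ->]].
      * rewrite <- gy0. apply joinable_in_along; auto.
      * rewrite <- gw0. apply joinable_in_along; auto.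
Qed.

Lemma lift_into_XH (Y : Top) (y0 : Y) (h : Y -> fibre_point) :
  connected Y -> locally_path_connected Y -> coord_continuous h -> h y0 = fibre_base ->
  { hH : Y -> XH | continuous hH /\ hH y0 = xH0 /\ forall y, proj1_sig (hH y) = h y }.
Proof.
  intros CY LY Hh H0.
  assert (R : forall y, reachable (h y)) by (intros y; exists Y, y0, y, h; auto).
  exists (fun y => exist _ (h y) (R y)). split; [| split].
  - apply continuous_into_XH; auto.
  - apply reachable_point_eq; simpl; auto.
  - auto.
Qed.

Lemma connected_XH : connected XH.
Proof.
  apply (connected_of_connected_images XH xH0). intros [z Rz].
  pose proof Rz as (Y & y0 & y & h & CY & LY & Hh & H0 & Hy).
  destruct (lift_into_XH Y y0 h CY LY Hh H0) as [hH [HC [Hb Hv]]].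
  exists Y, hH, y0, y. split; auto. split; auto. split; auto.
  apply reachable_point_eq; simpl; rewrite Hv; auto.
Qed.

Lemma induced_sub_proj (j : J) (a : I -> X) :
  induced_sub pH xH0 a -> induced_sub (p j) (xt0 j) a.
Proof.
  intros [b [Hb Hhom]]. exists (fun s => proj j (b s)).
  split; [exact (is_loop_comp (proj j) xH0 b (continuous_coord_XH (Some j)) Hb) |].
  replace (fun s => p j (proj j (b s))) with (fun s => pH (b s)).
  - rewrite p_xt0. exact Hhom.
  - apply functional_extensionality; intros s. unfold proj, pH. rewrite fcoord_over; auto.
Qed.

Hypotheses (p_cont : forall j, continuous (p j))
  (p_ul : forall j, unique_lifting (p j) (xt0 j)).

Lemma unique_lifting_XH : unique_lifting pH xH0.
Proof.
  intros Y y0 f CY LY Hf f0 Hloops.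
  assert (Hlift : forall j, exists fj : Y -> Xt j,
      (continuous fj /\ fj y0 = xt0 j /\ forall y, p j (fj y) = f y) /\
      forall gt : Y -> Xt j, (continuous gt /\ gt y0 = xt0 j /\ forall y, p j (gt y) = f y) -> gt = fj).
  { intros j. apply (p_ul j); auto.
    - rewrite p_xt0; exact f0.
    - intros g Hg. apply induced_sub_proj, Hloops, Hg. }
  pose (L := fun j => constructive_indefinite_description _ (Hlift j)).
  pose (h := fun y => FibrePoint (f y) (fun j => proj1_sig (L j) y)
                        (fun j => proj2 (proj2 (proj1 (proj2_sig (L j)))) y)).
  assert (Hh : coord_continuous h).
  { intros [j |]; [exact (proj1 (proj1 (proj2_sig (L j)))) | exact Hf]. }
  assert (H0 : h y0 = fibre_base).
  { apply fibre_point_eq; [exact f0 | intros j; exact (proj1 (proj2 (proj1 (proj2_sig (L j)))))]. }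
  destruct (lift_into_XH Y y0 h CY LY Hh H0) as [hH [HC [Hb Hv]]].
  exists hH. split; [split; [| split]; auto; intros y; unfold pH; rewrite Hv; auto |].
  intros gt [Gc [G0 Gp]]. apply functional_extensionality; intros y.
  apply reachable_point_eq. rewrite Hv. apply fibre_point_eq; [apply Gp |].
  intros j. change (fcoord (proj1_sig (gt y)) j) with ((fun y => proj j (gt y)) y).
  rewrite (proj2 (proj2_sig (L j)) (fun y => proj j (gt y))); auto.
  split; [| split].
  - exact (continuous_comp gt (proj j) Gc (continuous_coord_XH (Some j))).
  - rewrite G0; auto.
  - intros y'. unfold proj. rewrite fcoord_over. apply Gp.
Qed.

Lemma induced_sub_XH (a : I -> X) :
  is_loop x0 a -> (forall j, induced_sub (p j) (xt0 j) a) -> induced_sub pH xH0 a.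
Proof.
  intros Ha Hind.
  assert (Hlift : forall j, exists aj : I -> Xt j, is_loop (xt0 j) aj /\ forall s, p j (aj s) = a s)
    by (intros j; apply induced_loop_lifts; auto).
  pose (L := fun j => constructive_indefinite_description _ (Hlift j)).
  pose (h := fun t => FibrePoint (a t) (fun j => proj1_sig (L j) t)
                        (fun j => proj2 (proj2_sig (L j)) t)).
  destruct Ha as [Pa [a0 a1]].
  assert (Hh : coord_continuous (Y := TopI) h).
  { intros [j |]; [exact (proj1 (proj1 (proj2_sig (L j)))) | exact Pa]. }
  assert (H0 : h I0 = fibre_base).
  { apply fibre_point_eq; [exact a0 | intros j; exact (proj1 (proj2 (proj1 (proj2_sig (L j)))))]. }
  assert (H1 : h I1 = fibre_base).
  { apply fibre_point_eq; [exact a1 | intros j; exact (proj2 (proj2 (proj1 (proj2_sig (L j)))))]. }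
  destruct (lift_into_XH TopI I0 h connected_I lpc_I Hh H0) as [hH [HC [Hb Hv]]].
  assert (Hloop : is_loop xH0 hH).
  { split; [exact HC | split; auto]. apply reachable_point_eq. rewrite Hv, H1; auto. }
  exists hH. split; auto.
  assert (Hover : (fun s => pH (hH s)) = a).
  { apply functional_extensionality; intros s. unfold pH. rewrite Hv; auto. }
  rewrite <- Hover.
  apply loop_homotopic_refl, (is_loop_comp pH xH0 hH (continuous_coord_XH None) Hloop).
Qed.

Lemma XH_generalized_covering :
  connected XH /\ locally_path_connected XH /\ continuous pH /\ pH xH0 = x0 /\
  unique_lifting pH xH0 /\
  forall a, is_loop x0 a -> (induced_sub pH xH0 a <-> forall j, induced_sub (p j) (xt0 j) a).
Proof.
  split; [apply connected_XH |]. split; [apply lpc_XH |].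
  split; [exact (continuous_coord_XH None) |]. split; [reflexivity |].
  split; [apply unique_lifting_XH |].
  intros a Ha; split.
  - intros Hind j. apply induced_sub_proj, Hind.
  - apply induced_sub_XH, Ha.
Qed.

End FibreProduct.

Lemma generalized_covering_family (X : Top) (x0 : X) (J : Type) (Hs : J -> (I -> X) -> Prop) :
  (forall j, generalized_covering_subgroup X x0 (Hs j)) ->
  exists (Xt : J -> Top) (xt0 : forall j, Xt j) (p : forall j, Xt j -> X),
    forall j, p j (xt0 j) = x0 /\ continuous (p j) /\ unique_lifting (p j) (xt0 j) /\
      forall a, is_loop x0 a -> (Hs j a <-> induced_sub (p j) (xt0 j) a).
Proof.
  intros Hgc.
  pose (D := fun j => constructive_indefinite_description _ (Hgc j)).
  pose (E := fun j => constructive_indefinite_description _ (proj2_sig (D j))).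
  pose (G := fun j => constructive_indefinite_description _ (proj2_sig (E j))).
  exists (fun j => proj1_sig (D j)), (fun j => proj1_sig (E j)), (fun j => proj1_sig (G j)).
  intros j. destruct (proj2_sig (G j)) as (_ & _ & Hcont & Hbase & Hul & Hchar). auto.
Qed.

Theorem corollary2p11 (X : Top) (x0 : X)
  (HX : connected X) (HXl : locally_path_connected X)
  (J : Type) (Hs : J -> (I -> X) -> Prop)
  (Hgc : forall j, generalized_covering_subgroup X x0 (Hs j)) :
  generalized_covering_subgroup X x0 (fun a => forall j, Hs j a).
Proof.
  destruct (generalized_covering_family X x0 J Hs Hgc) as (Xt & xt0 & p & Hp).
  assert (p_xt0 : forall j, p j (xt0 j) = x0) by (intros j; apply Hp).
  destruct (XH_generalized_covering X x0 J Xt xt0 p p_xt0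
              (fun j => proj1 (proj2 (Hp j))) (fun j => proj1 (proj2 (proj2 (Hp j)))))
    as (Hconn & Hlpc & Hcont & Hbase & Hul & Hchar).
  exists (XH _ _ _ _ _ _ p_xt0), (xH0 _ _ _ _ _ _ p_xt0), (pH _ _ _ _ _ _ p_xt0).
  repeat (split; [assumption |]).
  intros a Ha. rewrite Hchar by exact Ha.
  split; intros Hall j; apply (proj2 (proj2 (proj2 (Hp j))) a Ha), Hall.
Qed.
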